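(* Let $\bm{x}\in\mathbb{R}^d$, $X\in\mathbb{R}^{d\times n}$, ${\bm w}\in\mathbb{R}^n$, $\alpha_1>0$, $\alpha_2\ge 0$, and define for ${\bm z}\in\mathbb{R}^n$ $$f({\bm z})=\tfrac12\|\bm{x}-X{\bm z}\|_2^2+\alpha_1\|X\,\mathrm{Diag}({\bm z})\|_*+\tfrac{\alpha_2}{2}\|{\bm z}-{\bm w}\|_2^2 .$$ Suppose (after reordering columns/coordinates consistently) $X=[\hat X,\tilde X]$ with $\tilde X\in\mathbb{R}^{d\times q}$, $\hat X\in\mathbb{R}^{d\times(n-q)}$, ${\bm w}=[\hat{\bm w};\tilde{\bm w}]$ with $\tilde{\bm w}\in\mathbb{R}^q$, and let ${\bm z}=[\hat{\bm z};\tilde{\bm z}]$ be any vector split the same way. Let $\bar{\bm x}_0=\tilde X\mathbf{1}/q$, $\bar z=\mathbf{1}^T\tilde{\bm z}/q$, $\bar w=\mathbf{1}^T\tilde{\bm w}/q$, and let $\epsilon\ge0$ be such that $$\max\{\|\tilde X-\bar{\bm x}_0\mathbf{1}^T\|_*,\ \|\tilde X-\bar{\bm x}_0\mathbf{1}^T\|_F,\ \|\tilde X-\bar{\bm x}_0\mathbf{1}^T\|_2\}\le\epsilon\quad\text{and}\quad\|\tilde{\bm w}-\bar w\mathbf{1}\|_2\le\epsilon .$$ Let ${\bm y}^*\in\mathbb{R}^q$ be the optimal solution of $\min_{{\bm y}}\|{\bm y}-\tilde{\bm w}\|_2^2$ s.t. ${\bm y}^T\mathbf{1}=q\bar z$.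 Assume $\bar{\bm x}_0\neq 0$ and $[\hat X\mathrm{Diag}(\hat{\bm z})\ \ \bar{\bm x}_0\tilde{\bm z}^T]\neq 0$. Define $$\gamma=\Big(\big(\alpha_1+\|\bm{x}-\hat X\hat{\bm z}-\tilde X(\bar z\mathbf{1})\|_2\big)\|\tilde{\bm z}\|_2+\alpha_1|\bar z|\Big)\epsilon,$$ $$\delta=\sqrt{\frac{\Big(2\gamma-\alpha_2\sum_{j=1}^q(y_j^*-\bar z)(y_j^*+\bar z-2\tilde w_j)\Big)\,\big\|[\hat X\mathrm{Diag}(\hat{\bm z})\ \ \bar{\bm x}_0\tilde{\bm z}^T]\big\|_2}{\alpha_1\|\bar{\bm x}_0\|_2^2}} .$$ If $\|\tilde{\bm z}-\bar z\mathbf{1}\|_2>\delta$, then $f([\hat{\bm z};\tilde{\bm z}])>f([\hat{\bm z};\bar z\mathbf{1}])$.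
   Context: $\|\cdot\|_*$ is the nuclear norm (sum of singular values), $\|\cdot\|_F$ the Frobenius norm, $\|\cdot\|_2$ the Euclidean norm for vectors and spectral norm for matrices. $\mathrm{Diag}({\bm z})$ is the diagonal matrix with ${\bm z}$ on its main diagonal; $\mathbf{1}$ is the all-ones vector of the appropriate length ($\mathbb{R}^q$ above). The quantity $\|X\mathrm{Diag}({\bm z})\|_*$ is called the trace Lasso of ${\bm z}$. (The expression under the square root is nonnegative since $\gamma\ge0$ and $\sum_j(y_j^*-\bar z)(y_j^*+\bar z-2\tilde w_j)=\|{\bm y}^*-\tilde{\bm w}\|_2^2-\|\bar z\mathbf{1}-\tilde{\bm w}\|_2^2\le 0$.) *)

From HB Require Import structures.
From mathcomp Require Import all_boot all_order all_algebra.
From mathcomp Require Import boolp classical_sets reals.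
Set Implicit Arguments. Unset Strict Implicit. Unset Printing Implicit Defensive.
Import Order.TTheory GRing.Theory Num.Theory.
Local Open Scope ring_scope.
Local Open Scope classical_set_scope.

(* Singular value decomposition A = U * Sigma * V^T, with U, V orthogonal and
   Sigma the m x n rectangular "diagonal" matrix with nonnegative entries s 0, s 1, ...
   on its main diagonal (only s i for i < minn m n matter). *)
Definition is_svd (R : realType) (m n : nat) (A : 'M[R]_(m, n))
  (U : 'M[R]_m) (s : nat -> R) (V : 'M[R]_n) : Prop :=
  U^T *m U = 1%:M /\ V^T *m V = 1%:M /\ (forall i, 0 <= s i) /\
  A = U *m (\matrix_(i < m, j < n) (if (i : nat) == j then s i else 0)) *m V^T.

Definition nucnorm (R : realType) (m n : nat) (A : 'M[R]_(m, n)) : R :=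
  xget 0 [set t | exists U s V, is_svd A U s V /\ t = \sum_(i < minn m n) s i].

Definition specnorm (R : realType) (m n : nat) (A : 'M[R]_(m, n)) : R :=
  xget 0 [set t | exists U s V, is_svd A U s V /\
                   t = \big[Num.max/0]_(i < minn m n) s i].

Definition fronorm (R : realType) (m n : nat) (A : 'M[R]_(m, n)) : R :=
  Num.sqrt (\sum_i \sum_j A i j ^+ 2).

Definition vnorm (R : realType) (n : nat) (v : 'cV[R]_n) : R :=
  Num.sqrt (\sum_i v i 0 ^+ 2).

Definition Diag (R : realType) (n : nat) (z : 'cV[R]_n) : 'M[R]_n := diag_mx z^T.

Definition ones (R : realType) (n : nat) : 'cV[R]_n := const_mx 1.

Definition fobj (R : realType) (d n : nat) (x : 'cV[R]_d) (X : 'M[R]_(d, n))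
  (w : 'cV[R]_n) (a1 a2 : R) (z : 'cV[R]_n) : R :=
  2^-1 * vnorm (x - X *m z) ^+ 2 + a1 * nucnorm (X *m Diag z)
  + a2 / 2 * vnorm (z - w) ^+ 2.

From Pilot Require Import Defs.
From HB Require Import structures.
From mathcomp Require Import all_boot all_order all_algebra.
From mathcomp Require Import boolp classical_sets reals.
From mathcomp Require Import topology normedtype derive.
From mathcomp Require Import ring lra.
Import Order.TTheory GRing.Theory Num.Theory.
Set Implicit Arguments. Unset Strict Implicit. Unset Printing Implicit Defensive.
Local Open Scope ring_scope.

(* Write z = [zh; zt], zb = zbar 1 and dd = zt - zb, so that 1^T dd = 0 and
   |zt|^2 = |dd|^2 + |zb|^2.  Splitting Xt = xbar0 1^T + E, the objective
   difference f([zh; zt]) - f([zh; zb]) is bounded below term by term: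
   - the loss changes by at least -|r| eps |zt|, since Xt dd = E dd;
   - Xt Diag(z) = xbar0 z^T + E Diag(z), so up to errors |zt| eps and |zbar| eps
     the trace-Lasso terms are the nuclear norms of M = [Xh Diag(zh), xbar0 zt^T]
     and of M0 = [Xh Diag(zh), xbar0 zb^T];
   - nucnorm M - nucnorm M0 >= |dd|^2 |xbar0|^2 / (2 |M|_2) (key estimate);
   - the regularizer changes by at least the sum in delta, by optimality of y*.
   The sum of these bounds is positive exactly when |dd| > delta. *)

Section InnerProduct.
Variable R : realType.

Definition dot n (u v : 'cV[R]_n) : R := (u^T *m v) 0 0.

Lemma dotE n (u v : 'cV[R]_n) : dot u v = \sum_i u i 0 * v i 0.
Proof. by rewrite /dot mxE; apply: eq_bigr => i _; rewrite mxE. Qed.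

Lemma dotC n (u v : 'cV[R]_n) : dot u v = dot v u.
Proof. by rewrite !dotE; apply: eq_bigr => i _; rewrite mulrC. Qed.

Lemma dotDl n (u w v : 'cV[R]_n) : dot (u + w) v = dot u v + dot w v.
Proof. by rewrite !dotE -big_split; apply: eq_bigr => i _; rewrite mxE mulrDl. Qed.

Lemma dotDr n (u w v : 'cV[R]_n) : dot v (u + w) = dot v u + dot v w.
Proof. by rewrite ![dot v _]dotC dotDl. Qed.

Lemma dotZl n c (u v : 'cV[R]_n) : dot (c *: u) v = c * dot u v.
Proof. by rewrite !dotE mulr_sumr; apply: eq_bigr => i _; rewrite mxE mulrA. Qed.

Lemma dotZr n c (u v : 'cV[R]_n) : dot v (c *: u) = c * dot v u.
Proof. by rewrite ![dot v _]dotC dotZl. Qed.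

Lemma dotNl n (u v : 'cV[R]_n) : dot (- u) v = - dot u v.
Proof. by rewrite -scaleN1r dotZl mulN1r. Qed.

Lemma dotBl n (u w v : 'cV[R]_n) : dot (u - w) v = dot u v - dot w v.
Proof. by rewrite dotDl dotNl. Qed.

Lemma dotBr n (u w v : 'cV[R]_n) : dot v (u - w) = dot v u - dot v w.
Proof. by rewrite ![dot v _]dotC dotBl. Qed.

Lemma dot0l n (v : 'cV[R]_n) : dot 0 v = 0.
Proof. by rewrite dotE big1 // => i _; rewrite mxE mul0r. Qed.

Lemma dot_col_mx m n (x x' : 'cV[R]_m) (y y' : 'cV[R]_n) :
  dot (col_mx x y) (col_mx x' y') = dot x x' + dot y y'.
Proof. by rewrite /dot tr_col_mx mul_row_col mxE. Qed.

Lemma dot_mulmxl m n (A : 'M[R]_(m, n)) u v : dot (A *m u) v = dot u (A^T *m v).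
Proof. by rewrite /dot trmx_mul mulmxA. Qed.

Lemma dot_isometry m n (U : 'M[R]_(m, n)) a b :
  U^T *m U = 1%:M -> dot (U *m a) (U *m b) = dot a b.
Proof. by move=> hU; rewrite dot_mulmxl mulmxA hU mul1mx. Qed.

Lemma trmx_mul_dot n (u v : 'cV[R]_n) : u^T *m v = (dot u v)%:M.
Proof. exact: mx11_scalar. Qed.

Lemma dotvv_ge0 n (v : 'cV[R]_n) : 0 <= dot v v.
Proof. by rewrite dotE sumr_ge0 // => i _; rewrite -expr2 sqr_ge0. Qed.

Lemma dotvv_eq0 n (v : 'cV[R]_n) : (dot v v == 0) = (v == 0).
Proof.
apply/idP/idP; last by move/eqP->; rewrite dot0l.
rewrite dotE psumr_eq0; last by move=> i _; rewrite -expr2 sqr_ge0.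
move/allP => v0; apply/eqP/matrixP => i j; rewrite (ord1 j) mxE.
by have /implyP/(_ isT) := v0 i (mem_index_enum i); rewrite -expr2 sqrf_eq0 => /eqP.
Qed.

Lemma dotvv_gt0 n (v : 'cV[R]_n) : v != 0 -> 0 < dot v v.
Proof. by move=> v0; rewrite lt_def dotvv_eq0 v0 dotvv_ge0. Qed.

Lemma dot_eq0_all n (v : 'cV[R]_n) : (forall y, dot v y = 0) -> v = 0.
Proof. by move=> H; apply/eqP; rewrite -dotvv_eq0 H. Qed.

Lemma dot_delta n (i : 'I_n) : dot (delta_mx i 0) (delta_mx i 0) = 1.
Proof.
rewrite dotE (bigD1 i) //= big1 ?mxE ?eqxx ?mulr1 ?addr0 //.
by move=> j /negbTE ji; rewrite mxE ji mul0r.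
Qed.

Lemma vnormE n (v : 'cV[R]_n) : vnorm v = Num.sqrt (dot v v).
Proof. by rewrite /vnorm dotE; congr Num.sqrt; apply: eq_bigr => i _; rewrite expr2. Qed.

Lemma vnorm2 n (v : 'cV[R]_n) : vnorm v ^+ 2 = dot v v.
Proof. by rewrite vnormE sqr_sqrtr // dotvv_ge0. Qed.

Lemma vnorm_ge0 n (v : 'cV[R]_n) : 0 <= vnorm v.
Proof. by rewrite vnormE sqrtr_ge0. Qed.

Lemma vnorm_eq0 n (v : 'cV[R]_n) : (vnorm v == 0) = (v == 0).
Proof. by rewrite -dotvv_eq0 -vnorm2 sqrf_eq0. Qed.

Lemma vnorm_gt0 n (v : 'cV[R]_n) : v != 0 -> 0 < vnorm v.
Proof. by move=> v0; rewrite lt_def vnorm_eq0 v0 vnorm_ge0. Qed.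

Lemma vnormZ n c (v : 'cV[R]_n) : vnorm (c *: v) = `|c| * vnorm v.
Proof. by rewrite !vnormE dotZl dotZr mulrA -expr2 sqrtrM ?sqr_ge0 // sqrtr_sqr. Qed.

Lemma vnorm_isometry m n (U : 'M[R]_(m, n)) a :
  U^T *m U = 1%:M -> vnorm (U *m a) = vnorm a.
Proof. by move=> hU; rewrite !vnormE dot_isometry. Qed.

Lemma vnorm_le m n (a : 'cV[R]_m) (b : 'cV[R]_n) :
  (vnorm a <= vnorm b) = (dot a a <= dot b b).
Proof. by rewrite !vnormE ler_sqrt // dotvv_ge0. Qed.

Lemma vnorm_le_mul m n c (a : 'cV[R]_m) (b : 'cV[R]_n) : 0 <= c ->
  (vnorm a <= c * vnorm b) = (dot a a <= c ^+ 2 * dot b b).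
Proof.
move=> c0; rewrite -(ger0_norm c0) -vnormZ vnorm_le dotZl dotZr mulrA -expr2.
by rewrite ger0_norm.
Qed.

Lemma vnorm_ge_mul m n c (a : 'cV[R]_m) (b : 'cV[R]_n) : 0 <= c ->
  (c * vnorm b <= vnorm a) = (c ^+ 2 * dot b b <= dot a a).
Proof.
move=> c0; rewrite -(ger0_norm c0) -vnormZ vnorm_le dotZl dotZr mulrA -expr2.
by rewrite ger0_norm.
Qed.

(* Cauchy-Schwarz, proved by expanding |u - t v|^2 >= 0 at t = <u,v>/<v,v>. *)
Lemma cauchy_schwarz n (u v : 'cV[R]_n) : dot u v ^+ 2 <= dot u u * dot v v.
Proof.
have [->|v0] := eqVneq v 0; first by rewrite !(dotC u) !dot0l expr0n /= mulr0.
have hv := dotvv_gt0 v0; pose t := dot u v / dot v v.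
have := dotvv_ge0 (u - t *: v).
rewrite dotBl !dotBr !dotZl !dotZr (dotC v u) /t => H.
rewrite -subr_ge0.
have -> : dot u u * dot v v - dot u v ^+ 2 =
    (dot u u - dot u v / dot v v * dot u v -
    (dot u v / dot v v * dot u v -
     dot u v / dot v v * (dot u v / dot v v * dot v v))) * dot v v.
  by field; rewrite gt_eqF.
by rewrite mulr_ge0 // ltW.
Qed.

Lemma dot_le_vnorm n (u v : 'cV[R]_n) : dot u v <= vnorm u * vnorm v.
Proof.
have := cauchy_schwarz u v; rewrite -ler_sqrt ?mulr_ge0 ?dotvv_ge0 //.
rewrite sqrtr_sqr sqrtrM ?dotvv_ge0 // -!vnormE; exact: le_trans (ler_norm _).
Qed.

(* Householder reflections: any two vectors of equal norm are exchanged by a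
   symmetric orthogonal matrix.  This is the rotation step of the SVD. *)
Lemma householder n (a b : 'cV[R]_n) : vnorm a = vnorm b ->
  exists Q : 'M[R]_n, [/\ Q^T *m Q = 1%:M, Q^T = Q & Q *m a = b].
Proof.
move=> hab; have [->|nab] := eqVneq a b.
  by exists 1%:M; rewrite trmx1 mulmx1 mul1mx.
pose u := a - b; pose c := dot u u.
have c0 : c != 0 by rewrite dotvv_eq0 subr_eq0.
have hP : (u *m u^T) *m (u *m u^T) = c *: (u *m u^T).
  by rewrite mulmxA -(mulmxA u) trmx_mul_dot mul_mx_scalar -scalemxAl.
pose Q := 1%:M - (2 / c) *: (u *m u^T).
have QT : Q^T = Q by rewrite /Q linearB /= trmx1 linearZ /= trmx_mul trmxK.
exists Q; split => //.
  rewrite QT /Q mulmxBl mul1mx mulmxBr mulmx1 -scalemxAl -scalemxAr hP.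
  rewrite !scalerA.
  have -> : 2 / c * (2 / c) * c = 2 / c + 2 / c by field.
  by rewrite scalerDl opprB addrK subrK.
have hab2 : dot a a = dot b b by rewrite -!vnorm2 hab.
have hc : c = 2 * (dot a a - dot a b).
  by rewrite /c /u !dotBl !dotBr hab2 (dotC b a); ring.
rewrite /Q mulmxBl mul1mx -scalemxAl -mulmxA trmx_mul_dot mul_mx_scalar scalerA.
have -> : 2 / c * dot u a = 1.
  rewrite /u dotBl (dotC b a) hc; field.
  by move: c0; rewrite hc mulf_eq0 negb_or => /andP[].
by rewrite scale1r /u opprB addrC subrK.
Qed.

End InnerProduct.

(* A unit vector v maximizing
   |A v| exists by compactness of the sphere; it is an eigenvector of A^T A,
   so after Householder rotations A becomes block-diagonal diag(|A v|, A'),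
   and induction on the size applies to A'. *)
Section SVDExistence.
Import numFieldNormedType.Exports.
Local Open Scope classical_set_scope.
Local Open Scope ring_scope.
Variable R : realType.

Definition Sig m n (s : nat -> R) : 'M[R]_(m, n) :=
  \matrix_(i < m, j < n) (if (i : nat) == j then s i else 0).

Lemma Sig_block m n (s : nat -> R) :
  Sig (1 + m) (1 + n) s = block_mx (s 0%N)%:M 0 0 (Sig m n (fun k => s k.+1)).
Proof.
apply/matrixP => i j; rewrite -[i]splitK -[j]splitK.
case: (split i) => i'; case: (split j) => j' /=;
  rewrite ?block_mxEul ?block_mxEur ?block_mxEdl ?block_mxEdr !mxE /=.
- by rewrite !ord1.
- by rewrite ord1.
- by rewrite ord1.
- by rewrite eqSS.
Qed.

Lemma is_svd0 m n : is_svd (0 : 'M[R]_(m, n)) 1%:M (fun=> 0) 1%:M.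
Proof.
do 3?split; rewrite ?trmx1 ?mulmx1 //.
by rewrite mul1mx; apply/matrixP => i j; rewrite !mxE; case: ifP.
Qed.

Lemma mx_eq0_of m n (A : 'M[R]_(m, n)) : (forall x : 'cV[R]_n, A *m x = 0) -> A = 0.
Proof.
move=> H; apply/matrixP => i j; have := H (delta_mx j 0).
by rewrite -colE => /matrixP /(_ i 0); rewrite !mxE.
Qed.

Lemma continuous_sumr (T : topologicalType) (I : finType) (F : I -> T -> R) :
  (forall i, continuous (F i)) -> continuous (fun x => \sum_i F i x).
Proof. by move=> cF; apply: continuous_big => //; exact: add_continuous. Qed.

Lemma continuous_mulr (T : topologicalType) (f g : T -> R) :
  continuous f -> continuous g -> continuous (fun x => f x * g x).
Proof. by move=> cf cg x; exact: continuousM (cf x) (cg x). Qed.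

Lemma exists_maximizing_direction m n (A : 'M[R]_(m, n.+1)) :
  exists2 v : 'cV[R]_n.+1, dot v v = 1 &
    forall x, dot x x = 1 -> dot (A *m x) (A *m x) <= dot (A *m v) (A *m v).
Proof.
pose g := fun r : 'rV[R]_n.+1 => \sum_i r ord0 i * r ord0 i.
pose f := fun r : 'rV[R]_n.+1 =>
  \sum_i (\sum_j A i j * r ord0 j) * (\sum_j A i j * r ord0 j).
have cg : continuous g.
  by apply: continuous_sumr => i; apply: continuous_mulr; exact: coord_continuous.
have cf : continuous f.
  apply: continuous_sumr => i; apply: continuous_mulr; apply: continuous_sumr => j;
  apply: continuous_mulr; (exact: cst_continuous || exact: coord_continuous).
pose S := [set r : 'rV[R]_n.+1 | g r = 1].
have S0 : S !=set0.
  exists (delta_mx 0 0); rewrite /S /g /= (bigD1 0) //= big1.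
    by rewrite !mxE eqxx mulr1 addr0.
  by move=> i /negbTE i0; rewrite !mxE i0 /= mulr0.
have cS : compact S.
  apply: (@subclosed_compact _ S
    [set r | forall i : 'I_n.+1, `[(-1 : R), 1]%classic (r ord0 i)]).
  - have -> : S = g @^-1` [set x | x = 1] by [].
    by move: cg => /continuous_closedP; apply; exact: closed_eq.
  - apply: (@rV_compact R n.+1 (fun=> `[(-1 : R), 1]%classic)) => i.
    exact: segment_compact.
  - move=> r; rewrite /S /g /= => hr i; rewrite in_itv /= -ler_norml.
    rewrite -(@ler_pXn2r _ 2) ?nnegrE // expr1n real_normK ?num_real //.
    rewrite -hr (bigD1 i) //= -expr2 lerDl sumr_ge0 // => j _.
    by rewrite -expr2 sqr_ge0.
have [r rS rmax] := compact_EVT_max S0 cS (@continuous_subspaceT _ _ S f cf).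
have gE (x : 'cV[R]_n.+1) : dot x x = g x^T.
  by rewrite dotE /g; apply: eq_bigr => i _; rewrite !mxE.
have fE (x : 'cV[R]_n.+1) : dot (A *m x) (A *m x) = f x^T.
  rewrite dotE /f; apply: eq_bigr => i _; rewrite !mxE.
  by congr (_ * _); apply: eq_bigr => j _; rewrite !mxE.
exists r^T; first by rewrite gE trmxK; move: rS; rewrite inE.
by move=> x hx; rewrite !fE trmxK; apply: rmax; rewrite inE /S /= -gE.
Qed.

(* If t a + t^2 b <= 0 for every real t, then a = 0 (take t = a / (|b| + 1)). *)
Lemma quadratic_le0_lin0 (a b : R) : (forall t, t * a + t ^+ 2 * b <= 0) -> a = 0.
Proof.
move=> H; have K0 : 0 < `|b| + 1 by rewrite ltr_pwDr.
have hb : - b <= `|b| by rewrite -normrN ler_norm.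
have : a ^+ 2 * (`|b| + 1 + b) <= 0.
  have -> : a ^+ 2 * (`|b| + 1 + b) =
      (a / (`|b| + 1) * a + (a / (`|b| + 1)) ^+ 2 * b) * (`|b| + 1) ^+ 2.
    by field; rewrite gt_eqF.
  by apply: mulr_le0_ge0; [exact: H | exact: sqr_ge0].
rewrite pmulr_lle0; last by lra.
by rewrite le_eqVlt sqrf_eq0 ltNge sqr_ge0 orbF => /eqP.
Qed.

(* A maximizing unit vector v of |A x|^2 / |x|^2 is an eigenvector of A^T A
   for the eigenvalue |A v|^2 (first-order optimality condition). *)
Lemma maximizing_direction_eigen m n (A : 'M[R]_(m, n)) v :
  (forall x, dot (A *m x) (A *m x) <= dot (A *m v) (A *m v) * dot x x) ->
  dot v v = 1 ->
  A^T *m (A *m v) = dot (A *m v) (A *m v) *: v.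
Proof.
move=> H v1; set l := dot (A *m v) (A *m v).
apply/eqP; rewrite -subr_eq0; apply/eqP; apply: dot_eq0_all => y.
rewrite dotBl dotZl dotC -dot_mulmxl.
pose a := 2 * (dot (A *m v) (A *m y) - l * dot v y).
pose b := dot (A *m y) (A *m y) - l * dot y y.
suff : a = 0.
  by move/eqP; rewrite mulf_eq0 pnatr_eq0 /= subr_eq0 (dotC (A *m v)) => /eqP->; rewrite subrr.
apply: (@quadratic_le0_lin0 a b) => t.
have := H (v + t *: y).
rewrite mulmxDr -scalemxAr !dotDl !dotDr !dotZl !dotZr v1 (dotC y v)
  (dotC (A *m y) (A *m v)) -/l /a /b -subr_ge0 => h.
by rewrite -oppr_ge0; apply: le_trans h _; rewrite le_eqVlt; apply/orP; left; apply/eqP; ring.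
Qed.

Lemma max_on_sphere_homogeneous m n (A : 'M[R]_(m, n)) v :
  (forall x, dot x x = 1 -> dot (A *m x) (A *m x) <= dot (A *m v) (A *m v)) ->
  forall x, dot (A *m x) (A *m x) <= dot (A *m v) (A *m v) * dot x x.
Proof.
move=> H x; have [->|x0] := eqVneq x 0; first by rewrite mulmx0 !dot0l mulr0.
have hx := dotvv_gt0 x0; pose c := (Num.sqrt (dot x x))^-1.
have hc2 : c ^+ 2 = (dot x x)^-1 by rewrite /c exprVn sqr_sqrtr // ltW.
have := H (c *: x); rewrite -scalemxAr !dotZl !dotZr !mulrA -expr2 hc2.
by rewrite mulVf ?gt_eqF // => /(_ erefl); rewrite -ler_pdivrMr // mulrC.
Qed.

Lemma block_of_first_basis m n (B : 'M[R]_(1 + m, 1 + n)) (sg : R) :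
  B *m delta_mx 0 0 = sg *: (delta_mx 0 0 : 'cV_(1 + m)) ->
  (delta_mx 0 0 : 'cV_(1 + m))^T *m B = sg *: (delta_mx 0 0 : 'cV_(1 + n))^T ->
  B = block_mx sg%:M 0 0 (drsubmx B).
Proof.
move=> Bcol Brow.
have Bij (i : 'I_(1 + m)) (j : 'I_(1 + n)) : B i j = (B *m (delta_mx j 0 : 'cV_(1 + n))) i 0.
  by rewrite -colE [RHS]mxE.
have Bij' (i : 'I_(1 + m)) (j : 'I_(1 + n)) : B i j = ((delta_mx 0 i : 'rV_(1 + m)) *m B) 0 j.
  by rewrite -rowE [RHS]mxE.
have l0m : lshift m (0 : 'I_1) = 0 by apply/val_inj.
have l0n : lshift n (0 : 'I_1) = 0 by apply/val_inj.
rewrite -[LHS](@submxK _ 1 m 1 n); congr block_mx; apply/matrixP => i j;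
  rewrite !ord1 [LHS]mxE [LHS]mxE ?l0m ?l0n.
- by rewrite Bij Bcol !mxE !eqxx mulr1.
- by rewrite Bij' -trmx_delta Brow !mxE /= mulr0.
- by rewrite Bij Bcol !mxE /= mulr0.
Qed.

Lemma svd_deflation m n (A : 'M[R]_(1 + m, 1 + n)) : A != 0 ->
  exists (Hu : 'M[R]_(1 + m)) (Hv : 'M[R]_(1 + n)) (sg : R),
    [/\ Hu^T *m Hu = 1%:M, Hv^T *m Hv = 1%:M, 0 < sg &
    A = Hu *m block_mx sg%:M 0 0 (drsubmx (Hu^T *m A *m Hv)) *m Hv^T].
Proof.
move=> A0; have [v v1 hmax] := exists_maximizing_direction A.
have Hh := max_on_sphere_homogeneous hmax.
have eig := maximizing_direction_eigen Hh v1.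
set l := dot (A *m v) (A *m v) in Hh eig.
have l0 : 0 < l.
  rewrite lt_def dotvv_ge0 andbT dotvv_eq0; apply: contra A0 => /eqP Av0.
  apply/eqP/mx_eq0_of => x; apply/eqP; rewrite -dotvv_eq0 eq_le dotvv_ge0 andbT.
  by have := Hh x; rewrite /l Av0 dot0l mul0r.
pose sg := Num.sqrt l.
have sg0 : 0 < sg by rewrite sqrtr_gt0.
have sg2 : sg ^+ 2 = l by rewrite sqr_sqrtr // ltW.
pose u := sg^-1 *: (A *m v).
have u1 : dot u u = 1.
  by rewrite dotZl dotZr mulrA -expr2 exprVn sg2 mulVf // gt_eqF.
pose e0 : 'cV[R]_(1 + n) := delta_mx 0 0.
pose f0 : 'cV[R]_(1 + m) := delta_mx 0 0.
have [Hv [hHv HvT Hve]] : exists Q : 'M[R]_(1 + n), [/\ Q^T *m Q = 1%:M, Q^T = Q & Q *m e0 = v].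
  by apply: householder; rewrite !vnormE v1 dot_delta.
have [Hu [hHu HuT Huf]] : exists Q : 'M[R]_(1 + m), [/\ Q^T *m Q = 1%:M, Q^T = Q & Q *m f0 = u].
  by apply: householder; rewrite !vnormE u1 dot_delta.
pose B := Hu^T *m A *m Hv.
have hHv' : Hv *m Hv = 1%:M by rewrite -{1}HvT.
have hHu' : Hu *m Hu = 1%:M by rewrite -{1}HuT.
have Bcol : B *m e0 = sg *: f0.
  rewrite /B -mulmxA Hve -mulmxA.
  have -> : A *m v = sg *: u by rewrite /u scalerA divff ?gt_eqF // scale1r.
  by rewrite -scalemxAr HuT -Huf mulmxA hHu' mul1mx.
have Brow : f0^T *m B = sg *: e0^T.
  rewrite /B !mulmxA -trmx_mul Huf.
  have -> : u^T *m A = (sg *: v)^T.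
    rewrite -[u^T *m A]trmxK trmx_mul trmxK /u -scalemxAr eig scalerA -sg2.
    by rewrite expr2 mulKf // gt_eqF.
  by rewrite linearZ /= -scalemxAl -Hve trmx_mul -mulmxA hHv mulmx1.
have Bblk := block_of_first_basis Bcol Brow.
exists Hu, Hv, sg; split => //.
by rewrite -Bblk /B !mulmxA HuT hHu' mul1mx -mulmxA HvT hHv' mulmx1.
Qed.

Lemma orthogonal_mul_block k (H : 'M[R]_(1 + k)) (W : 'M[R]_k) :
  H^T *m H = 1%:M -> W^T *m W = 1%:M ->
  (H *m block_mx 1%:M 0 0 W)^T *m (H *m block_mx 1%:M 0 0 W) = 1%:M.
Proof.
move=> hH hW; rewrite trmx_mul mulmxA -(mulmxA _ _ H) hH mulmx1.
rewrite tr_block_mx mulmx_block hW trmx1 !trmx0 !mulmx0 !mul0mx.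
by rewrite !mulmx1 !addr0 add0r (scalar_mx_block 1 k 1).
Qed.

Lemma conj_block k l (U : 'M[R]_k) (V : 'M[R]_l) (S : 'M[R]_(k, l)) c :
  block_mx c%:M 0 0 (U *m S *m V^T) =
  (block_mx 1%:M 0 0 U : 'M_(1 + k)) *m block_mx c%:M 0 0 S
    *m (block_mx 1%:M 0 0 V : 'M_(1 + l))^T.
Proof.
rewrite tr_block_mx !mulmx_block trmx1 !trmx0 !mulmx0 !mul0mx !mulmx1 !mul1mx.
by rewrite !addr0 !add0r mul0mx.
Qed.

Lemma svd_exists n : forall m (A : 'M[R]_(m, n)), exists U s V, is_svd A U s V.
Proof.
elim: n => [|n IH] m A.
  by rewrite thinmx0; exists 1%:M, (fun=> 0), 1%:M; exact: is_svd0.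
case: m A => [|m] A.
  by rewrite flatmx0; exists 1%:M, (fun=> 0), 1%:M; exact: is_svd0.
have [->|A0] := eqVneq A 0; first by exists 1%:M, (fun=> 0), 1%:M; exact: is_svd0.
have [Hu [Hv [sg [hHu hHv sg0 ->]]]] := svd_deflation (A0 : (A : 'M_(1 + m, 1 + n)) != 0).
set A' := drsubmx _.
have [U' [s' [V' [hU' [hV' [hs' ->]]]]]] := IH m A'.
pose s k := if k is k'.+1 then s' k' else sg.
exists (Hu *m block_mx 1%:M 0 0 U'), s, (Hv *m block_mx 1%:M 0 0 V').
do 2 (split; first exact: orthogonal_mul_block).
split; first by case => [|k] /=; [exact: ltW | exact: hs'].
rewrite -/(Sig m n s') -/(Sig (1 + m) (1 + n) s) Sig_block /= trmx_mul.
by rewrite conj_block !mulmxA.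
Qed.

End SVDExistence.

(* Defs defines
   specnorm and nucnorm by choosing some SVD; we show they equal max s and
   sum s for EVERY SVD, which yields the variational characterizations used
   later:
   - specnorm A is the least c >= 0 with |A x| <= c |x| for all x;
   - tr(W^T A) <= c * nucnorm A whenever |W x| <= c |x| for all x, with
     equality (c = 1) for the polar factor W = U Sig(1) V^T. *)
Section SpectralNuclear.
Variable R : realType.

Definition opbound m n (c : R) (W : 'M[R]_(m, n)) := forall x, vnorm (W *m x) <= c * vnorm x.

Lemma sum_if_unique k (P : pred 'I_k) (h : 'I_k -> R) a :
  P a -> (forall b, P b -> b = a) -> \sum_i (if P i then h i else 0) = h a.
Proof.
move=> Pa H; rewrite (bigD1 a) //= Pa big1 ?addr0 // => i /negbTE ia.
by case: ifP => // /H ia'; rewrite ia' eqxx in ia.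
Qed.

Lemma sum_if_none k (P : pred 'I_k) (h : 'I_k -> R) :
  (forall b, ~~ P b) -> \sum_i (if P i then h i else 0) = 0.
Proof. by move=> H; apply: big1 => i _; rewrite (negbTE (H i)). Qed.

Lemma sum_diag_mul m n (i : 'I_m) (f g : 'I_n -> R) :
  (\sum_(j : 'I_n) (if (i : nat) == j then f j else 0)) *
  (\sum_(j : 'I_n) (if (i : nat) == j then g j else 0)) =
  \sum_(j : 'I_n) (if (i : nat) == j then f j * g j else 0).
Proof.
case: (pickP (fun j : 'I_n => (i : nat) == j)) => [a /eqP ia|none].
  have H (b : 'I_n) : (i : nat) == b -> b = a.
    by move=> /eqP ib; apply/val_inj; rewrite /= -ia -ib.
  by rewrite !(sum_if_unique _ (introT eqP ia) H).
by rewrite !sum_if_none ?mul0r // => b; rewrite none.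
Qed.

Lemma sum_diag_le m n (j : 'I_n) (c : R) : 0 <= c ->
  \sum_(i : 'I_m) (if (i : nat) == j then c else 0) <= c.
Proof.
move=> c0; case: (pickP (fun i : 'I_m => (i : nat) == j)) => [a /eqP aj|none].
  have H (b : 'I_m) : (b : nat) == j -> b = a.
    by move=> /eqP bj; apply/val_inj; rewrite /= aj bj.
  by rewrite (sum_if_unique (fun=> c) (introT eqP aj) H).
by rewrite sum_if_none // => b; rewrite none.
Qed.

Lemma sum_diag_min m n (s : nat -> R) :
  \sum_(j : 'I_n) \sum_(k : 'I_m) (if (k : nat) == j then s k else 0) =
  \sum_(i < minn m n) s i.
Proof.
have inner (j : 'I_n) :
    \sum_(k : 'I_m) (if (k : nat) == j then s k else 0) = if (j < m)%N then s j else 0.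
  case: ltnP => hj.
    rewrite (@sum_if_unique _ _ (fun k : 'I_m => s k) (Ordinal hj)) //= => b /eqP hb.
    by apply/val_inj; rewrite /= hb.
  rewrite sum_if_none // => b; apply/negP => /eqP hb.
  by move: (ltn_ord b); rewrite hb ltnNge hj.
rewrite (eq_bigr _ (fun j _ => inner j)) -big_mkcond /=.
case: (leqP n m) => h; last by rewrite (big_ord_widen n (fun i => s i) (ltnW h)).
by rewrite big_mkcond; apply: eq_bigr => j _; rewrite (leq_trans (ltn_ord j) h).
Qed.

Lemma dot_Sig m n (s t : nat -> R) (y : 'cV[R]_n) :
  dot (Sig m n s *m y) (Sig m n t *m y) =
  \sum_(i : 'I_m) \sum_(j : 'I_n) (if (i : nat) == j then s i * t i * y j 0 ^+ 2 else 0).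
Proof.
have entry (u : nat -> R) (i : 'I_m) :
    (Sig m n u *m y) i 0 = \sum_(j : 'I_n) (if (i : nat) == j then u i * y j 0 else 0).
  by rewrite mxE; apply: eq_bigr => j _; rewrite mxE; case: ifP; rewrite ?mul0r.
rewrite dotE; apply: eq_bigr => i _; rewrite !entry sum_diag_mul.
by apply: eq_bigr => j _; case: ifP => _ //; rewrite expr2; ring.
Qed.

Lemma sum_diag_sqr_le m n (y : 'cV[R]_n) :
  \sum_(i : 'I_m) \sum_(j : 'I_n) (if (i : nat) == j then y j 0 ^+ 2 else 0) <= dot y y.
Proof.
rewrite exchange_big dotE; apply: ler_sum => j _; rewrite -expr2.
exact/sum_diag_le/sqr_ge0.
Qed.

Definition smax m n (s : nat -> R) := \big[Num.max/0]_(i < minn m n) s i.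

Lemma smax_ge0 m n (s : nat -> R) : (forall i, 0 <= s i) -> 0 <= smax m n s.
Proof. by move=> hs; apply: (big_ind (fun x => 0 <= x)) => // x y hx _; rewrite le_max hx. Qed.

Lemma smax_ub m n (s : nat -> R) k : (k < minn m n)%N -> s k <= smax m n s.
Proof. by move=> hk; rewrite /smax (bigD1 (Ordinal hk)) //= le_max lexx. Qed.

Lemma smax_cases m n (s : nat -> R) :
  smax m n s = 0 \/ exists2 k, (k < minn m n)%N & smax m n s = s k.
Proof.
apply: (big_ind (fun x => x = 0 \/ exists2 k, (k < minn m n)%N & x = s k)) => //.
- by left.
- by move=> x y hx hy; case: (leP x y).
- by move=> i _; right; exists i.
Qed.

(* Unpacking is_svd; V is square, so V V^T = 1 as well. *)
Lemma is_svdP m n (A : 'M[R]_(m, n)) U s V : is_svd A U s V ->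
  [/\ U^T *m U = 1%:M, V^T *m V = 1%:M, V *m V^T = 1%:M, (forall i, 0 <= s i) &
      A = U *m Sig m n s *m V^T].
Proof. by move=> [hU [hV [hs hA]]]; split => //; exact: mulmx1C. Qed.

Lemma svd_dot m n (A : 'M[R]_(m, n)) U s V (W : 'M[R]_(m, n)) t x :
  is_svd A U s V -> W = U *m Sig m n t *m V^T ->
  dot (W *m x) (A *m x) = \sum_(i : 'I_m) \sum_(j : 'I_n)
     (if (i : nat) == j then t i * s i * (V^T *m x) j 0 ^+ 2 else 0).
Proof.
by move=> /is_svdP [hU _ _ _ ->] ->; rewrite -!mulmxA dot_isometry // dot_Sig.
Qed.

Lemma svd_dotV m n (A : 'M[R]_(m, n)) U s V x :
  is_svd A U s V -> dot (V^T *m x) (V^T *m x) = dot x x.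
Proof. by move=> /is_svdP [_ _ hVV _ _]; rewrite dot_isometry // trmxK. Qed.

Lemma svd_opbound m n (A : 'M[R]_(m, n)) U s V : is_svd A U s V -> opbound (smax m n s) A.
Proof.
move=> h x; have [_ _ _ hs hA] := is_svdP h.
rewrite vnorm_le_mul ?smax_ge0 // (svd_dot x h hA) -(svd_dotV x h).
apply: le_trans (ler_wpM2l (sqr_ge0 _) (sum_diag_sqr_le m (V^T *m x))).
rewrite mulr_sumr; apply: ler_sum => i _; rewrite mulr_sumr; apply: ler_sum => j _.
case: ifP => hij; last by rewrite mulr0.
apply: ler_wpM2r; first exact: sqr_ge0.
rewrite -expr2 ler_sqr ?nnegrE ?smax_ge0 ?hs //; apply: smax_ub.
by rewrite leq_min ltn_ord (eqP hij) ltn_ord.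
Qed.

(* smax is attained: some x /= 0 has |A x| >= smax |x| (a right singular vector). *)
Lemma svd_opbound_sharp m n (A : 'M[R]_(m, n)) U s V :
  is_svd A U s V -> smax m n s = 0 \/
    exists2 x : 'cV[R]_n, x != 0 & smax m n s * vnorm x <= vnorm (A *m x).
Proof.
move=> h; have [hU hV hVV hs hA] := is_svdP h.
case: (smax_cases m n s) => [->|[k hk ->]]; first by left.
right; rewrite leq_min in hk; case/andP: hk => km kn.
exists (V *m delta_mx (Ordinal kn) 0).
  by rewrite -dotvv_eq0 dot_isometry // dot_delta oner_eq0.
rewrite vnorm_ge_mul ?hs // dot_isometry // dot_delta mulr1.
rewrite (svd_dot _ h hA) mulmxA hV mul1mx.
rewrite (bigD1 (Ordinal km)) //= (bigD1 (Ordinal kn)) //= eqxx.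
rewrite !mxE eqxx /= expr1n mulr1 -expr2 -addrA lerDl addr_ge0 //.
  by apply: sumr_ge0 => j _; case: ifP => // _; rewrite mulr_ge0 ?sqr_ge0 ?mulr_ge0.
apply: sumr_ge0 => i _; apply: sumr_ge0 => j _; case: ifP => // _.
by rewrite mulr_ge0 ?sqr_ge0 ?mulr_ge0.
Qed.

Lemma sharp_bound_le m n (A : 'M[R]_(m, n)) c d : 0 <= d -> opbound d A ->
  (c = 0 \/ exists2 x : 'cV[R]_n, x != 0 & c * vnorm x <= vnorm (A *m x)) -> c <= d.
Proof.
move=> d0 hd [->//|[x x0 hx]].
by rewrite -(ler_pM2r (vnorm_gt0 x0)); exact: le_trans hx (hd x).
Qed.

Lemma specnorm_svd m n (A : 'M[R]_(m, n)) U s V :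
  is_svd A U s V -> specnorm A = smax m n s.
Proof.
move=> h; rewrite /specnorm; set P := (X in xget 0 X).
have ex : exists t, P t.
  by have [U' [s' [V' h']]] := svd_exists A; exists (smax m n s'), U', s', V'.
have [U' [s' [V' [h' ->]]]] := xgetPex 0 ex.
have [_ _ _ hs _] := is_svdP h; have [_ _ _ hs' _] := is_svdP h'.
apply/eqP; rewrite eq_le.
rewrite (sharp_bound_le (smax_ge0 _ _ hs) (svd_opbound h) (svd_opbound_sharp h')).
by rewrite (sharp_bound_le (smax_ge0 _ _ hs') (svd_opbound h') (svd_opbound_sharp h)).
Qed.

Definition polar m n (U : 'M[R]_m) (V : 'M[R]_n) : 'M[R]_(m, n) :=
  U *m Sig m n (fun=> 1) *m V^T.

Lemma col_dot m n p (A : 'M[R]_(m, n)) (B : 'M[R]_(m, p)) j k :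
  dot (col j A) (col k B) = (A^T *m B) j k.
Proof. by rewrite dotE mxE; apply: eq_bigr => i _; rewrite !mxE. Qed.

Lemma vnorm_col_orthogonal m n (V : 'M[R]_(m, n)) j : V^T *m V = 1%:M -> vnorm (col j V) = 1.
Proof. by move=> hV; rewrite vnormE col_dot hV mxE eqxx sqrtr1. Qed.

Lemma svd_trace_le m n (A : 'M[R]_(m, n)) U s V (W : 'M[R]_(m, n)) c :
  is_svd A U s V -> opbound c W -> \tr (W^T *m A) <= c * \sum_(i < minn m n) s i.
Proof.
move=> h hW; have [hU hV hVV hs hA] := is_svdP h.
rewrite hA !mulmxA mxtrace_mulC !mulmxA -sum_diag_min mulr_sumr.
apply: ler_sum => j _; rewrite mxE mulr_sumr; apply: ler_sum => k _.
rewrite [X in _ * X]mxE; case: ifP => _; last by rewrite !mulr0.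
rewrite mulrC [X in _ <= X]mulrC; apply: ler_wpM2l; first exact: hs.
rewrite -trmx_mul -col_dot [col j _]colE -mulmxA -colE.
apply: le_trans (dot_le_vnorm _ _) _.
rewrite (vnorm_col_orthogonal k hU) mulr1.
by apply: le_trans (hW _) _; rewrite (vnorm_col_orthogonal j hV) mulr1.
Qed.

Lemma svd_polar m n (A : 'M[R]_(m, n)) U s V : is_svd A U s V ->
  [/\ opbound 1 (polar U V), \tr ((polar U V)^T *m A) = \sum_(i < minn m n) s i,
      forall x, 0 <= dot (polar U V *m x) (A *m x) &
      forall x, dot (A *m x) (A *m x) <= smax m n s * dot (polar U V *m x) (A *m x)].
Proof.
move=> h; have [hU hV hVV hs hA] := is_svdP h.
have hW := fun x => svd_dot x h (erefl (polar U V)).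
have hAA := fun x => svd_dot x h hA.
split.
- move=> x; rewrite mul1r vnorm_le /polar -!mulmxA dot_isometry // dot_Sig.
  rewrite -(svd_dotV x h); apply: le_trans (sum_diag_sqr_le m _).
  by apply: ler_sum => i _; apply: ler_sum => j _; case: ifP; rewrite ?mul1r.
- rewrite hA /polar !trmx_mul trmxK !mulmxA -(mulmxA _ U^T U) hU mulmx1.
  rewrite mxtrace_mulC !mulmxA hV mul1mx -sum_diag_min.
  apply: eq_bigr => j _; rewrite mxE; apply: eq_bigr => k _; rewrite !mxE.
  by case: ifP => _; rewrite ?mul1r ?mul0r.
- move=> x; rewrite hW; apply: sumr_ge0 => i _; apply: sumr_ge0 => j _.
  by case: ifP => // _; rewrite mul1r mulr_ge0 ?sqr_ge0.
- move=> x; rewrite hW hAA mulr_sumr; apply: ler_sum => i _.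
  rewrite mulr_sumr; apply: ler_sum => j _; case: ifP => hij; last by rewrite mulr0.
  rewrite mul1r mulrA; apply: ler_wpM2r; first exact: sqr_ge0.
  apply: ler_wpM2r; first exact: hs.
  by apply: smax_ub; rewrite leq_min ltn_ord (eqP hij) ltn_ord.
Qed.

(* nucnorm does not depend on the chosen SVD: two SVDs bound each other's
   singular value sums through their polar factors. *)
Lemma nucnorm_svd m n (A : 'M[R]_(m, n)) U s V :
  is_svd A U s V -> nucnorm A = \sum_(i < minn m n) s i.
Proof.
move=> h; rewrite /nucnorm; set P := (X in xget 0 X).
have ex : exists t, P t.
  have [U' [s' [V' h']]] := svd_exists A.
  by exists (\sum_(i < minn m n) s' i), U', s', V'.
have [U' [s' [V' [h' ->]]]] := xgetPex 0 ex.
have [b1 t1 _ _] := svd_polar h; have [b2 t2 _ _] := svd_polar h'.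
apply/eqP; rewrite eq_le; apply/andP; split.
  by rewrite -t2 -[X in _ <= X]mul1r; exact: svd_trace_le h b2.
by rewrite -t1 -[X in _ <= X]mul1r; exact: svd_trace_le h' b1.
Qed.

Lemma nucnorm_dual m n (A W : 'M[R]_(m, n)) c :
  opbound c W -> \tr (W^T *m A) <= c * nucnorm A.
Proof.
move=> hW; have [U [s [V h]]] := svd_exists A.
by rewrite (nucnorm_svd h); exact: svd_trace_le h hW.
Qed.

(* The dual certificate attaining nucnorm A; its quadratic form also controls
   |A x|^2 through the spectral norm (used to differentiate nucnorm). *)
Lemma nucnorm_attained m n (A : 'M[R]_(m, n)) : exists W : 'M[R]_(m, n),
  [/\ opbound 1 W, \tr (W^T *m A) = nucnorm A,
      forall x, 0 <= dot (W *m x) (A *m x) &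
      forall x, dot (A *m x) (A *m x) <= specnorm A * dot (W *m x) (A *m x)].
Proof.
have [U [s [V h]]] := svd_exists A.
by exists (polar U V); rewrite (nucnorm_svd h) (specnorm_svd h); exact: svd_polar.
Qed.

Lemma specnorm_ge0 m n (A : 'M[R]_(m, n)) : 0 <= specnorm A.
Proof.
have [U [s [V h]]] := svd_exists A; have [_ _ _ hs _] := is_svdP h.
by rewrite (specnorm_svd h) smax_ge0.
Qed.

Lemma specnorm_opbound m n (A : 'M[R]_(m, n)) : opbound (specnorm A) A.
Proof. by have [U [s [V h]]] := svd_exists A; rewrite (specnorm_svd h); exact: svd_opbound h. Qed.

Lemma specnorm_le m n (A : 'M[R]_(m, n)) c : 0 <= c -> opbound c A -> specnorm A <= c.
Proof.
move=> c0 hc; have [U [s [V h]]] := svd_exists A.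
by rewrite (specnorm_svd h); apply: sharp_bound_le hc (svd_opbound_sharp h).
Qed.

Lemma specnorm_gt0 m n (A : 'M[R]_(m, n)) : A != 0 -> 0 < specnorm A.
Proof.
move=> A0; rewrite lt_def specnorm_ge0 andbT; apply: contra A0 => /eqP s0.
apply/eqP/mx_eq0_of => x; apply/eqP; rewrite -vnorm_eq0 eq_le vnorm_ge0 andbT.
by have := specnorm_opbound A x; rewrite s0 mul0r.
Qed.

End SpectralNuclear.

Section NormInequalities.
Variable R : realType.

Lemma nucnorm_mulr m n k (A : 'M[R]_(m, n)) (P : 'M[R]_(n, k)) c :
  opbound c P^T -> nucnorm (A *m P) <= c * nucnorm A.
Proof.
move=> hP; have [W [hW <- _ _]] := nucnorm_attained (A *m P).
rewrite mulmxA mxtrace_mulC mulmxA.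
have -> : P *m W^T = (W *m P^T)^T by rewrite trmx_mul trmxK.
by apply: nucnorm_dual => x; rewrite -mulmxA; apply: le_trans (hW _) _; rewrite mul1r.
Qed.

Lemma nucnorm_triangle m n (A B : 'M[R]_(m, n)) :
  nucnorm (A + B) <= nucnorm A + nucnorm B.
Proof.
have [W [hW <- _ _]] := nucnorm_attained (A + B).
by rewrite mulmxDr mxtraceD; apply: lerD; rewrite -[nucnorm _]mul1r; apply: nucnorm_dual.
Qed.

Lemma specnorm_mulr m n k (A : 'M[R]_(m, n)) (P : 'M[R]_(n, k)) c :
  0 <= c -> opbound c P -> specnorm (A *m P) <= specnorm A * c.
Proof.
move=> c0 hP; apply: specnorm_le; first by rewrite mulr_ge0 // specnorm_ge0.
move=> x; rewrite -mulmxA; apply: le_trans (specnorm_opbound _ _) _.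
by rewrite -mulrA ler_wpM2l // specnorm_ge0.
Qed.

Lemma orthogonal_opbound n (P : 'M[R]_n) : P^T *m P = 1%:M -> opbound 1 P.
Proof. by move=> hP x; rewrite vnorm_isometry // mul1r. Qed.

Lemma norms_mulr_orthogonal m n (N : 'M[R]_(m, n)) (P : 'M[R]_n) :
  P^T *m P = 1%:M -> nucnorm (N *m P) = nucnorm N /\ specnorm (N *m P) = specnorm N.
Proof.
move=> hP; have hP' : P *m P^T = 1%:M by exact: mulmx1C.
have bP : opbound 1 P by exact: orthogonal_opbound.
have bPT : opbound 1 P^T by apply: orthogonal_opbound; rewrite trmxK.
have eN : N = N *m P *m P^T by rewrite -mulmxA hP' mulmx1.
split; apply/eqP; rewrite eq_le; apply/andP; split.
- by rewrite -[nucnorm N]mul1r; exact: nucnorm_mulr.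
- by rewrite {1}eN -[nucnorm (N *m P)]mul1r; apply: nucnorm_mulr; rewrite trmxK.
- by rewrite -[specnorm N]mulr1; exact: specnorm_mulr.
- by rewrite {1}eN -[specnorm (N *m P)]mulr1; exact: specnorm_mulr.
Qed.

End NormInequalities.

(* A real function whose increments satisfy G t - G s >= - K (t - s)^2 on
   [a, b] is nondecreasing there: telescope along a uniform partition of
   mesh h, so the total error K (b - a) h tends to 0. *)
Lemma nondecreasing_of_quadratic_increments (R : realType) (G : R -> R) (K a b : R) :
  0 <= K -> a <= b ->
  (forall s t, a <= s -> s <= t -> t <= b -> - (K * (t - s) ^+ 2) <= G t - G s) ->
  G a <= G b.
Proof.
move=> K0 ab H; apply/ler_addgt0Pr => e e0.
pose N := (Num.bound (K * (b - a) ^+ 2 / e)).+1.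
have N0 : 0 < (N%:R : R) by rewrite ltr0n.
pose h := (b - a) / N%:R.
have h0 : 0 <= h by rewrite divr_ge0 ?subr_ge0 // ltW.
have hN : N%:R * h = b - a by rewrite /h mulrC divfK // gt_eqF.
pose u k := G (a + k%:R * h).
have tele : G b - G a = \sum_(0 <= k < N) (u k.+1 - u k).
  by rewrite telescope_sumr // /u mul0r addr0 hN addrCA subrr addr0.
have step k : (k < N)%N -> - (K * h ^+ 2) <= u k.+1 - u k.
  move=> kN; have -> : h = a + k.+1%:R * h - (a + k%:R * h) by rewrite -natr1; ring.
  apply: H; first by rewrite lerDl mulr_ge0.
    by rewrite lerD2l ler_wpM2r // ler_nat.
  by rewrite -lerBrDl -hN ler_wpM2r // ler_nat.
have lb : \sum_(0 <= k < N) - (K * h ^+ 2) <= G b - G a.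
  by rewrite tele; apply: ler_sum_nat => k /andP[_ kN]; exact: step.
rewrite sumr_const_nat subn0 -mulr_natl mulrN in lb.
have small : N%:R * (K * h ^+ 2) <= e.
  have -> : N%:R * (K * h ^+ 2) = K * (b - a) ^+ 2 / N%:R.
    by rewrite /h; field; rewrite gt_eqF.
  have : K * (b - a) ^+ 2 / e < N%:R.
    apply: lt_le_trans (archi_boundP _) _; last by rewrite ler_nat.
    by apply: divr_ge0; [apply: mulr_ge0 => //; exact: sqr_ge0 | exact: ltW].
  by rewrite ler_pdivrMr // ltr_pdivrMr // (mulrC e) => /ltW.
lra.
Qed.

(* Growth of the nuclear norm along a rank-one ray t |-> B + t v f^T, where
   B f = 0 and |f| = 1.  Writing N(t) for its nuclear norm and S for the
   spectral norm at the end point t1, the dual certificate at s gives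
   N(t) - N(s) >= (t - s) s |v|^2 / S, and integrating (via the quadratic
   increment lemma) yields N(t1) - N(t0) >= (t1^2 - t0^2) |v|^2 / (2 S). *)
Section RankOneRay.
Variables (R : realType) (d N : nat) (B : 'M[R]_(d, N)) (v : 'cV[R]_d) (f : 'cV[R]_N).
Hypotheses (f1 : dot f f = 1) (Bf : B *m f = 0).

Definition ray (t : R) : 'M[R]_(d, N) := B + t *: (v *m f^T).

(* 1 - al f f^T shrinks the f-component by the factor 1 - al. *)
Lemma shrink_opbound (al : R) : 0 <= al <= 1 -> opbound 1 (1%:M - al *: (f *m f^T)).
Proof.
move=> /andP[a0 a1] x; rewrite mul1r vnorm_le mulmxBl mul1mx -scalemxAl -mulmxA.
rewrite trmx_mul_dot mul_mx_scalar scalerA !dotBl !dotBr !dotZl !dotZr f1 (dotC x f).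
have H : 0 <= al * (2 - al) * dot f x ^+ 2.
  by rewrite mulr_ge0 ?sqr_ge0 // mulr_ge0 //; lra.
by rewrite -subr_ge0; apply: le_trans H _; rewrite le_eqVlt; apply/orP; left; apply/eqP; ring.
Qed.

Lemma shrink_sym (al : R) : (1%:M - al *: (f *m f^T))^T = 1%:M - al *: (f *m f^T).
Proof. by rewrite linearB /= trmx1 linearZ /= trmx_mul trmxK. Qed.

Lemma ray_mulf t : ray t *m f = t *: v.
Proof.
rewrite /ray mulmxDl Bf add0r -scalemxAl -mulmxA trmx_mul_dot f1.
by rewrite mul_mx_scalar scale1r.
Qed.

Lemma ray_shrink s t : 0 < t -> ray s = ray t *m (1%:M - (1 - s / t) *: (f *m f^T)).
Proof.
move=> t0; rewrite mulmxBr mulmx1 -scalemxAr mulmxA ray_mulf.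
rewrite /ray -scalemxAl scalerA -addrA -scalerBl; congr (_ + _ *: _).
by field; rewrite gt_eqF.
Qed.

Lemma ray_mono s t : 0 <= s -> s <= t ->
  nucnorm (ray s) <= nucnorm (ray t) /\ specnorm (ray s) <= specnorm (ray t).
Proof.
move=> s0 st; have [t0|tn0] := eqVneq t 0.
  by have -> : s = t by apply/eqP; rewrite eq_le st t0 s0.
have tp : 0 < t by rewrite lt_def tn0 (le_trans s0 st).
have hal : 0 <= 1 - s / t <= 1.
  by rewrite subr_ge0 ler_pdivrMr // mul1r st lerBlDr lerDl divr_ge0 // ltW.
rewrite (ray_shrink s tp); split.
  by rewrite -[nucnorm (ray t)]mul1r; apply: nucnorm_mulr; rewrite shrink_sym; exact: shrink_opbound.
by rewrite -[specnorm (ray t)]mulr1; apply: specnorm_mulr => //; exact: shrink_opbound.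
Qed.

Lemma trace_rank1 (W : 'M[R]_(d, N)) : \tr (W^T *m (v *m f^T)) = dot (W *m f) v.
Proof. by rewrite mulmxA mxtrace_mulC mulmxA -trmx_mul /dot /mxtrace big_ord1. Qed.

(* One-sided derivative bound: tested against the dual certificate W of ray s. *)
Lemma ray_increment s t S : 0 <= s -> s <= t -> specnorm (ray s) <= S -> 0 < S ->
  (t - s) * s * dot v v / S <= nucnorm (ray t) - nucnorm (ray s).
Proof.
move=> s0 st hS S0; have [->|sn0] := eqVneq s 0.
  by rewrite mulr0 !mul0r subr_ge0; case: (ray_mono (lexx 0) (le_trans s0 st)).
have sp : 0 < s by rewrite lt_def sn0 s0.
have [W [hW tW Wpos Wspec]] := nucnorm_attained (ray s).
have Wf : s * dot v v / S <= dot (W *m f) v.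
  have := Wspec f; have := Wpos f; rewrite ray_mulf !dotZl !dotZr => p1 p2.
  have h4 : s * (s * dot v v) <= S * (s * dot (W *m f) v).
    by apply: le_trans p2 _; exact: ler_wpM2r.
  rewrite ler_pdivrMr // -(ler_pM2l sp); apply: le_trans h4 _.
  by rewrite mulrCA [S * _]mulrC.
have ray_t : ray t = ray s + (t - s) *: (v *m f^T).
  by rewrite /ray -addrA -scalerDl; congr (_ + _ *: _); ring.
have dual : nucnorm (ray s) + (t - s) * dot (W *m f) v <= nucnorm (ray t).
  rewrite -tW -trace_rank1 -mxtraceZ -mxtraceD -linearZ /= -mulmxDr -ray_t.
  by rewrite -[nucnorm (ray t)]mul1r; exact: nucnorm_dual.
rewrite lerBrDl; apply: le_trans dual; rewrite lerD2l -!mulrA ler_wpM2l ?subr_ge0 //.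
by rewrite mulrA.
Qed.

(* Integrated growth bound, via the quadratic increment lemma applied to
   G t = N(t) - |v|^2 t^2 / (2 S). *)
Lemma ray_growth t0 t1 : 0 <= t0 -> t0 <= t1 -> 0 < specnorm (ray t1) ->
  (t1 ^+ 2 - t0 ^+ 2) * dot v v / (2 * specnorm (ray t1)) <=
  nucnorm (ray t1) - nucnorm (ray t0).
Proof.
move=> t00 t01; set S := specnorm (ray t1) => S0.
pose c := dot v v / S.
have c0 : 0 <= c by rewrite divr_ge0 ?dotvv_ge0 // ltW.
pose G t := nucnorm (ray t) - c * t ^+ 2 / 2.
have : G t0 <= G t1.
  apply: (@nondecreasing_of_quadratic_increments _ G (c / 2)) => // [|s t ts st tt1].
    by rewrite divr_ge0.
  have hs : specnorm (ray s) <= S.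
    by case: (ray_mono (le_trans t00 ts) (le_trans st tt1)).
  have := ray_increment (le_trans t00 ts) st hs S0.
  by rewrite /G /c; lra.
by rewrite /G /c; lra.
Qed.

End RankOneRay.

Section RowBlocks.
Variables (R : realType) (d p q : nat).

Lemma rank1_block_rotation (A : 'M[R]_(d, p)) (v : 'cV[R]_d) (c e : 'cV[R]_q) :
  dot e e = 1 -> exists2 P : 'M[R]_(p + q), P^T *m P = 1%:M &
    row_mx A (v *m c^T) *m P = row_mx A (v *m (vnorm c *: e)^T).
Proof.
move=> e1; have : vnorm c = vnorm (vnorm c *: e).
  by rewrite vnormZ ger0_norm ?vnorm_ge0 // [vnorm e]vnormE e1 sqrtr1 mulr1.
move=> /householder [Q [hQ QT Qc]]; exists (block_mx 1%:M 0 0 Q).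
  rewrite tr_block_mx mulmx_block hQ trmx1 !trmx0 !mulmx0 !mul0mx !mulmx1 !addr0 add0r.
  by rewrite -scalar_mx_block.
by rewrite mul_row_block !mulmx0 addr0 mulmx1 add0r -mulmxA -QT -trmx_mul Qc.
Qed.

Lemma nucnorm_rank1_gap (A : 'M[R]_(d, p)) (v : 'cV[R]_d) (a b : 'cV[R]_q) :
  (0 < q)%N -> vnorm b <= vnorm a -> row_mx A (v *m a^T) != 0 ->
  (dot a a - dot b b) * dot v v / (2 * specnorm (row_mx A (v *m a^T))) <=
  nucnorm (row_mx A (v *m a^T)) - nucnorm (row_mx A (v *m b^T)).
Proof.
move=> q0 ba M0; pose e : 'cV[R]_q := delta_mx (Ordinal q0) 0.
have e1 : dot e e = 1 by exact: dot_delta.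
pose f : 'cV[R]_(p + q) := col_mx 0 e.
have f1 : dot f f = 1 by rewrite dot_col_mx dot0l add0r.
have Bf : row_mx A 0 *m f = 0 by rewrite mul_row_col mulmx0 mul0mx addr0.
have rayE t : ray (row_mx A 0) v f t = row_mx A (v *m (t *: e)^T).
  rewrite /ray tr_col_mx trmx0 mul_mx_row mulmx0 scale_row_mx scaler0.
  by rewrite add_row_mx addr0 add0r linearZ /= scalemxAr.
have norms (c : 'cV[R]_q) :
    nucnorm (row_mx A (v *m c^T)) = nucnorm (ray (row_mx A 0) v f (vnorm c)) /\
    specnorm (row_mx A (v *m c^T)) = specnorm (ray (row_mx A 0) v f (vnorm c)).
  have [P hP EP] := rank1_block_rotation A v c e1.
  by rewrite rayE -EP; have [-> ->] := norms_mulr_orthogonal (row_mx A (v *m c^T)) hP.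
have [na sa] := norms a; have [nb _] := norms b.
rewrite na nb sa -[dot a a]vnorm2 -[dot b b]vnorm2; apply: (ray_growth f1 Bf) => //; first exact: vnorm_ge0.
by rewrite -sa specnorm_gt0.
Qed.

Lemma nucnorm_opp m n (P : 'M[R]_(m, n)) : nucnorm (- P) = nucnorm P.
Proof.
have bN : opbound 1 (- 1%:M : 'M[R]_n)^T.
  by apply: orthogonal_opbound; rewrite trmxK linearN /= trmx1 mulNmx mulmxN opprK mulmx1.
have le (Q : 'M[R]_(m, n)) : nucnorm (- Q) <= nucnorm Q.
  have -> : - Q = Q *m (- 1%:M) by rewrite mulmxN mulmx1.
  by rewrite -[nucnorm Q]mul1r; exact: nucnorm_mulr.
by apply/eqP; rewrite eq_le le -{1}[P]opprK le.
Qed.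

Lemma nucnorm_row_perturb (B : 'M[R]_(d, p)) (C P : 'M[R]_(d, q)) :
  nucnorm (row_mx B C) - nucnorm P <= nucnorm (row_mx B (C + P)) <=
  nucnorm (row_mx B C) + nucnorm P.
Proof.
have embed (Q : 'M[R]_(d, q)) : nucnorm (row_mx 0 Q : 'M[R]_(d, p + q)) <= nucnorm Q.
  have -> : row_mx 0 Q = Q *m row_mx (0 : 'M_(q, p)) 1%:M by rewrite mul_mx_row mulmx0 mulmx1.
  rewrite -[nucnorm Q]mul1r; apply: nucnorm_mulr => x.
  rewrite tr_row_mx trmx0 trmx1 mul_col_mx mul0mx mul1mx mul1r vnorm_le.
  by rewrite dot_col_mx dot0l add0r.
have split_row (C' Q : 'M[R]_(d, q)) : row_mx B (C' + Q) = row_mx B C' + row_mx 0 Q.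
  by rewrite add_row_mx addr0.
rewrite lerBlDr; apply/andP; split.
  rewrite -{1}(addrK P C) (split_row (C + P) (- P)); apply: le_trans (nucnorm_triangle _ _) _.
  by rewrite lerD2l -[X in _ <= X](nucnorm_opp P) embed.
rewrite split_row; apply: le_trans (nucnorm_triangle _ _) _.
by rewrite lerD2l embed.
Qed.

End RowBlocks.

Section Diagonal.
Variable R : realType.

Lemma Diag_col_mx p q (a : 'cV[R]_p) (b : 'cV[R]_q) :
  Diag (col_mx a b) = block_mx (Diag a) 0 0 (Diag b).
Proof. by rewrite /Diag tr_col_mx diag_mx_row. Qed.

Lemma Diag_opbound n (z : 'cV[R]_n) : opbound (vnorm z) (Diag z).
Proof.
move=> x; rewrite vnorm_le_mul ?vnorm_ge0 // vnorm2 !dotE mulr_sumr.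
apply: ler_sum => i _; rewrite /Diag mul_diag_mx !mxE.
have -> : z i 0 * x i 0 * (z i 0 * x i 0) = (z i 0 * z i 0) * (x i 0 * x i 0) by ring.
apply: ler_wpM2r; first by rewrite -expr2 sqr_ge0.
rewrite (bigD1 i) //= lerDl sumr_ge0 // => j _.
by rewrite -expr2 sqr_ge0.
Qed.

Lemma Diag_const_opbound n (c : R) : opbound `|c| (Diag (c *: ones R n)).
Proof.
have -> : Diag (c *: ones R n) = c%:M.
  by apply/matrixP => i j; rewrite /Diag !mxE mulr1.
by move=> x; rewrite mul_scalar_mx vnormZ.
Qed.

(* Diag(z) is symmetric, so nucnorm_mulr applies to E Diag(z). *)
Lemma nucnorm_mul_Diag m n (E : 'M[R]_(m, n)) z c :
  opbound c (Diag z) -> nucnorm (E *m Diag z) <= c * nucnorm E.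
Proof. by move=> hz; apply: nucnorm_mulr; rewrite /Diag tr_diag_mx. Qed.

(* Splitting X = c 1^T + (X - c 1^T) in X Diag(z), using 1^T Diag(z) = z^T. *)
Lemma mulmx_Diag_center d q (X : 'M[R]_(d, q)) (c : 'cV[R]_d) (z : 'cV[R]_q) :
  X *m Diag z = c *m z^T + (X - c *m (ones R q)^T) *m Diag z.
Proof.
have oneD : (ones R q)^T *m Diag z = z^T.
  by apply/matrixP => i j; rewrite /Diag mul_mx_diag !mxE mul1r !ord1.
by rewrite mulmxBl -mulmxA oneD addrC subrK.
Qed.

Lemma nucnorm_row_Diag_perturb d p q (B : 'M[R]_(d, p)) (u : 'cV[R]_d)
    (E : 'M[R]_(d, q)) (z : 'cV[R]_q) c eps :
  0 <= c -> opbound c (Diag z) -> nucnorm E <= eps ->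
  nucnorm (row_mx B (u *m z^T)) - c * eps <= nucnorm (row_mx B (u *m z^T + E *m Diag z)) <=
  nucnorm (row_mx B (u *m z^T)) + c * eps.
Proof.
move=> c0 hz hE; have hED : nucnorm (E *m Diag z) <= c * eps.
  by apply: le_trans (nucnorm_mul_Diag E hz) _; rewrite ler_wpM2l.
case/andP: (nucnorm_row_perturb B (u *m z^T) (E *m Diag z)) => lo hi.
apply/andP; split; first by apply: le_trans lo; rewrite lerD2l lerN2.
by apply: le_trans hi _; rewrite lerD2l.
Qed.

End Diagonal.

Lemma half_sqr_gap (R : realType) n (r u : 'cV[R]_n) :
  - (vnorm r * vnorm u) <= 2^-1 * dot (r - u) (r - u) - 2^-1 * dot r r.
Proof.
have := dot_le_vnorm r u; have := dotvv_ge0 u.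
by rewrite dotBl !dotBr (dotC u r); lra.
Qed.

Section Centering.
Variables (R : realType) (q : nat) (z : 'cV[R]_q) (c : R).
Hypothesis zsum : \sum_j z j 0 = q%:R * c.

(* z - c 1 is orthogonal to 1, whence Pythagoras and X (z - c 1) = (X - u 1^T)(z - c 1). *)
Lemma center_orth : dot (ones R q) (z - c *: ones R q) = 0.
Proof.
have dot1 (y : 'cV[R]_q) : dot (ones R q) y = \sum_j y j 0.
  by rewrite dotE; apply: eq_bigr => j _; rewrite mxE mul1r.
rewrite dotBr dotZr !dot1 zsum (eq_bigr (fun=> 1)) => [|j _]; last by rewrite mxE.
by rewrite sumr_const card_ord mulrC subrr.
Qed.

Lemma center_pythagoras :
  dot z z = dot (z - c *: ones R q) (z - c *: ones R q) + dot (c *: ones R q) (c *: ones R q).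
Proof.
have h : dot (c *: ones R q) z = dot (c *: ones R q) (c *: ones R q).
  by apply/eqP; rewrite -subr_eq0 -dotBr dotZl center_orth mulr0.
by rewrite dotBl !dotBr (dotC z (c *: _)) h; ring.
Qed.

Lemma mulmx_center d (X : 'M[R]_(d, q)) (u : 'cV[R]_d) :
  X *m (z - c *: ones R q) = (X - u *m (ones R q)^T) *m (z - c *: ones R q).
Proof.
by rewrite mulmxBl -mulmxA trmx_mul_dot center_orth mul_mx_scalar scale0r subr0.
Qed.

(* Fit term: with c 1 in place of z the residual changes by E (z - c 1), where
   E = X - u 1^T, hence the loss by at least -|residual| eps |z|. *)
Lemma loss_gap d (y : 'cV[R]_d) (X : 'M[R]_(d, q)) (u : 'cV[R]_d) eps :
  specnorm (X - u *m (ones R q)^T) <= eps ->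
  - (vnorm (y - X *m (c *: ones R q)) * (eps * vnorm z)) <=
  2^-1 * dot (y - X *m z) (y - X *m z)
  - 2^-1 * dot (y - X *m (c *: ones R q)) (y - X *m (c *: ones R q)).
Proof.
move=> hE; set E := X - u *m (ones R q)^T.
have -> : y - X *m z = (y - X *m (c *: ones R q)) - E *m (z - c *: ones R q).
  by rewrite -(mulmx_center _ u) mulmxBr opprB addrA subrK.
apply: le_trans (half_sqr_gap _ _); rewrite lerN2 ler_wpM2l ?vnorm_ge0 //.
apply: le_trans (specnorm_opbound _ _) _; apply: ler_pM; rewrite ?specnorm_ge0 ?vnorm_ge0 //.
by rewrite vnorm_le center_pythagoras lerDl dotvv_ge0.
Qed.

End Centering.

Lemma mean_sum (R : realType) q (z : 'cV[R]_q) : (0 < q)%N ->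
  \sum_j z j 0 = q%:R * ((\sum_j z j 0) / q%:R).
Proof. by move=> q0; rewrite mulrC divfK // pnatr_eq0 -lt0n. Qed.

Lemma fobj_split (R : realType) d p q (x : 'cV[R]_d) (Xh : 'M[R]_(d, p))
    (Xt : 'M[R]_(d, q)) (wh zh : 'cV[R]_p) (wt z : 'cV[R]_q) (a1 a2 : R) :
  fobj x (row_mx Xh Xt) (col_mx wh wt) a1 a2 (col_mx zh z) =
  2^-1 * dot (x - Xh *m zh - Xt *m z) (x - Xh *m zh - Xt *m z)
  + a1 * nucnorm (row_mx (Xh *m Diag zh) (Xt *m Diag z))
  + a2 / 2 * (dot (zh - wh) (zh - wh) + dot (z - wt) (z - wt)).
Proof.
rewrite /fobj !vnorm2 mul_row_col opprD addrA Diag_col_mx mul_row_block.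
by rewrite !mulmx0 addr0 add0r opp_col_mx add_col_mx dot_col_mx.
Qed.

(* The sum in delta is the excess of the optimal value over the value at zbar 1. *)
Lemma excess_identity (R : realType) q (y w : 'cV[R]_q) (c : R) :
  \sum_j (y j 0 - c) * (y j 0 + c - 2 * w j 0) =
  dot (y - w) (y - w) - dot (c *: ones R q - w) (c *: ones R q - w).
Proof. by rewrite !dotE -sumrB; apply: eq_bigr => j _; rewrite !mxE mulr1; ring. Qed.

Lemma lt_sqrt_dot (R : realType) n (y : 'cV[R]_n) (a : R) :
  Num.sqrt a < vnorm y -> a < dot y y.
Proof.
move=> h; have y0 : 0 < dot y y.
  by rewrite -vnorm2 exprn_gt0 //; apply: le_lt_trans h; exact: sqrtr_ge0.
by move: h; rewrite vnormE ltr_sqrt.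
Qed.

(* The final arithmetic: the hypothesis |z - zbar 1| > delta, squared and
   cleared of denominators, is exactly positivity of the lower bound. *)
Lemma margin_pos (R : realType) (a1 a2 g SS S vx D : R) :
  0 < a1 -> 0 < S -> 0 < vx -> (2 * g - a2 * SS) * S / (a1 * vx) < D ->
  0 < a1 * (D * vx / (2 * S)) - g + a2 * SS / 2.
Proof.
move=> a10 S0 vx0; rewrite ltr_pdivrMr ?mulr_gt0 // => h.
have -> : a1 * (D * vx / (2 * S)) - g + a2 * SS / 2 =
    (D * (a1 * vx) - (2 * g - a2 * SS) * S) / (2 * S).
  by field; rewrite gt_eqF.
by rewrite divr_gt0 ?mulr_gt0 // subr_gt0.
Qed.

Unset Implicit Arguments.

Theorem theorem1 (R : realType) (d p q : nat)
  (x : 'cV[R]_d) (Xh : 'M[R]_(d, p)) (Xt : 'M[R]_(d, q))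
  (wh : 'cV[R]_p) (wt : 'cV[R]_q) (zh : 'cV[R]_p) (zt : 'cV[R]_q)
  (a1 a2 eps : R) (ystar : 'cV[R]_q) :
  (0 < q)%N ->
  0 < a1 -> 0 <= a2 -> 0 <= eps ->
  let X : 'M[R]_(d, p + q) := row_mx Xh Xt in
  let w : 'cV[R]_(p + q) := col_mx wh wt in
  let xbar0 : 'cV[R]_d := (q%:R)^-1 *: (Xt *m ones R q) in
  let zbar : R := (\sum_j zt j 0) / q%:R in
  let wbar : R := (\sum_j wt j 0) / q%:R in
  let E : 'M[R]_(d, q) := Xt - xbar0 *m (ones R q)^T in
  nucnorm E <= eps -> fronorm E <= eps -> specnorm E <= eps ->
  vnorm (wt - wbar *: ones R q) <= eps ->
  (* ystar is the optimal solution of min ||y - wt||^2 s.t. y^T 1 = q * zbar *)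
  (\sum_j ystar j 0 = q%:R * zbar) ->
  (forall y : 'cV[R]_q, \sum_j y j 0 = q%:R * zbar ->
      vnorm (ystar - wt) ^+ 2 <= vnorm (y - wt) ^+ 2) ->
  xbar0 != 0 ->
  let M : 'M[R]_(d, p + q) := row_mx (Xh *m Diag zh) (xbar0 *m zt^T) in
  M != 0 ->
  let gamma : R :=
    ((a1 + vnorm (x - Xh *m zh - Xt *m (zbar *: ones R q))) * vnorm zt
      + a1 * `|zbar|) * eps in
  let delta : R :=
    Num.sqrt ((2 * gamma
               - a2 * \sum_j (ystar j 0 - zbar) * (ystar j 0 + zbar - 2 * wt j 0))
              * specnorm M / (a1 * vnorm xbar0 ^+ 2)) in
  vnorm (zt - zbar *: ones R q) > delta ->
  fobj x X w a1 a2 (col_mx zh zt) > fobj x X w a1 a2 (col_mx zh (zbar *: ones R q)).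
Proof.
move=> q0 a1p a2p _ X w xbar0 zbar wbar E hnuc _ hspec _ _ hopt hx0 M hM gamma delta hD.
have zsum : \sum_j zt j 0 = q%:R * zbar by exact: mean_sum.
have /lt_sqrt_dot := hD; rewrite {hD}/delta {}/gamma vnorm2 => hD.
have margin := margin_pos a1p (specnorm_gt0 hM) (dotvv_gt0 hx0) hD.
set zb := zbar *: ones R q in margin *.
rewrite /X /w !fobj_split /= (mulmx_Diag_center Xt xbar0 zt) (mulmx_Diag_center Xt xbar0 zb).
have fit := loss_gap zsum (x - Xh *m zh) hspec.
have [nz _] := andP (nucnorm_row_Diag_perturb (Xh *m Diag zh) xbar0 (vnorm_ge0 zt)
  (Diag_opbound zt) hnuc).
have [_ nzb] := andP (nucnorm_row_Diag_perturb (Xh *m Diag zh) xbar0 (normr_ge0 zbar)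
  (@Diag_const_opbound _ q zbar) hnuc).
have hzt := center_pythagoras zsum.
have zbzt : vnorm zb <= vnorm zt by rewrite vnorm_le hzt lerDr dotvv_ge0.
have gap := nucnorm_rank1_gap q0 zbzt hM; rewrite hzt addrK in gap.
have reg : \sum_j (ystar j 0 - zbar) * (ystar j 0 + zbar - 2 * wt j 0) <=
    dot (zt - wt) (zt - wt) - dot (zb - wt) (zb - wt).
  by rewrite excess_identity lerD2r -!vnorm2; exact: hopt.
have := ler_wpM2l (ltW a1p) nz; have := ler_wpM2l (ltW a1p) nzb.
have := ler_wpM2l (ltW a1p) gap; have := ler_wpM2l a2p reg.
lra.
Qed.
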